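(* Let $\sigma,\tau,\theta,\eta\in\mathbb{R}$ and $q\in(-1,1]$. Define $\lambda_0=0$ and $\lambda_{n+1}=\frac{1+q\lambda_n}{1-\sigma\tau\lambda_n}$ for $n\ge 0$, and assume that this sequence is well defined (i.e. $1-\sigma\tau\lambda_n\neq 0$ for all $n\ge0$) and that $\lambda_n\neq 0$ for all $n\ge 1$. Let $(\alpha_n)_{n\ge0},(\beta_n)_{n\ge0},(\gamma_n)_{n\ge0},(\delta_n)_{n\ge0},(\varepsilon_n)_{n\ge1},(\varphi_n)_{n\ge1}$ be real sequences satisfying the system (E1)–(E5) described in the context, with initial conditions $\alpha_0=\gamma_0=\delta_0=\varphi_1=0$, $\beta_0=\varepsilon_1=1$, and such that $(\alpha_n,\beta_n)\neq(0,0)$ for all $n\ge0$ and $(\varepsilon_n,\varphi_n)\neq(0,0)$ for all $n\ge1$. Then $\alpha_n=\sigma\lambda_n\beta_n$ for all $n\ge0$ and $\varphi_n=\tau\lambda_{n-1}\varepsilon_n$ for all $n\ge1$.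
   Context: The system (E1)–(E5) is: (E1) for $n\ge0$: $\tau\alpha_n\alpha_{n+1}+q\alpha_n\beta_{n+1}+\sigma\beta_n\beta_{n+1}=\alpha_{n+1}\beta_n$; (E2) for $n\ge2$: $\tau\varepsilon_{n-1}\varepsilon_n+q\varepsilon_n\varphi_{n-1}+\sigma\varphi_n\varphi_{n-1}=\varepsilon_{n-1}\varphi_n$; (E3) for $n\ge0$: $\theta\alpha_n+\eta\beta_n+\tau\alpha_n(\gamma_n+\gamma_{n+1})+\sigma\beta_n(\delta_n+\delta_{n+1})+q(\alpha_n\delta_{n+1}+\beta_n\gamma_n)=\beta_n\gamma_{n+1}+\alpha_n\delta_n$; (E4) for $n\ge1$: $\theta\varepsilon_n+\eta\varphi_n+\tau\varepsilon_n(\gamma_n+\gamma_{n-1})+\sigma\varphi_n(\delta_{n-1}+\delta_n)+q(\varphi_n\gamma_n+\delta_{n-1}\varepsilon_n)=\varepsilon_n\delta_n+\varphi_n\gamma_{n-1}$; (E5) for $n\ge1$: $1+\theta\gamma_n+\eta\delta_n+\tau\gamma_n^2+\sigma\delta_n^2+\tau(\alpha_{n-1}\varepsilon_n+\alpha_n\varepsilon_{n+1})+\sigma(\varphi_n\beta_{n-1}+\beta_n\varphi_{n+1})+q(\gamma_n\delta_n+\beta_{n-1}\varepsilon_n+\alpha_n\varphi_{n+1})=\gamma_n\delta_n+\beta_n\varepsilon_{n+1}+\varphi_n\alpha_{n-1}$. *)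

From Stdlib Require Import Reals.
Open Scope R_scope.

(* lambda_0 = 0, lambda_{n+1} = (1 + q lambda_n) / (1 - sigma tau lambda_n).
   Division is total in Stdlib; the theorem assumes the denominators are nonzero. *)
Fixpoint lam (sigma tau q : R) (n : nat) : R :=
  match n with
  | O => 0
  | S m => (1 + q * lam sigma tau q m) / (1 - sigma * tau * lam sigma tau q m)
  end.

(* Only (E1) and (E2) matter, and they are the same relation
   [t a a' + q a b' + s b b' = a' b] between consecutive pairs: (E1) for
   [(al, be)] with [(s, t) = (sigma, tau)], (E2) for [(ph, ep)] shifted by one
   with [(s, t) = (tau, sigma)].  If [a = s L b] with [b <> 0], that relation
   factors as [b (a' (1 - s t L) - s b' (1 + q L)) = 0], so [a' = s L' b'] with
   [L'] the next term of the [lam] recursion.  The pairs never vanish, hence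
   [b <> 0] whenever [a = s L b], and induction propagates the ratio. *)
From Stdlib Require Import Reals Lra Lia.
Open Scope R_scope.

Lemma lam_S (s t q : R) (n : nat) :
  lam s t q (S n) = (1 + q * lam s t q n) / (1 - s * t * lam s t q n).
Proof. reflexivity. Qed.

Lemma lam_sym (s t q : R) (n : nat) : lam t s q n = lam s t q n.
Proof.
  induction n as [|n IH]; [reflexivity|].
  rewrite !lam_S, IH, (Rmult_comm t s); reflexivity.
Qed.

Lemma ratio_step (s t q L a b a' b' : R) :
  b <> 0 -> 1 - s * t * L <> 0 -> a = s * L * b ->
  t * a * a' + q * a * b' + s * b * b' = a' * b ->
  a' = s * ((1 + q * L) / (1 - s * t * L)) * b'.
Proof.
  intros Hb Hd -> Hrel.
  assert (Hfac : b * (a' * (1 - s * t * L) - s * b' * (1 + q * L)) = 0) by lra.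
  destruct (Rmult_integral _ _ Hfac) as [Hb0 | Hlin]; [contradiction|].
  field_simplify_eq; [lra | exact Hd].
Qed.

Lemma ratio_invariant (s t q : R) (x y : nat -> R) :
  (forall n, 1 - s * t * lam s t q n <> 0) ->
  (forall n, x n <> 0 \/ y n <> 0) ->
  (forall n, t * x n * x (S n) + q * x n * y (S n) + s * y n * y (S n)
             = x (S n) * y n) ->
  x 0%nat = 0 ->
  forall n, x n = s * lam s t q n * y n.
Proof.
  intros Hwd Hxy Hrec Hx0 n.
  induction n as [|n IH]; [simpl; rewrite Hx0; ring|].
  assert (Hy : y n <> 0).
  { intro Hy0; destruct (Hxy n) as [Hx | Hy]; [apply Hx | exact (Hy Hy0)].
    rewrite IH, Hy0; ring. }
  rewrite lam_S; exact (ratio_step _ _ _ _ _ _ _ _ Hy (Hwd n) IH (Hrec n)).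
Qed.

Theorem mainTheorem1
  (sigma tau theta eta q : R)
  (al be ga de ep ph : nat -> R)
  (Hq : -1 < q <= 1)
  (Hwd : forall n : nat, 1 - sigma * tau * lam sigma tau q n <> 0)
  (Hnz : forall n : nat, (1 <= n)%nat -> lam sigma tau q n <> 0)
  (E1 : forall n : nat,
      tau * al n * al (S n) + q * al n * be (S n) + sigma * be n * be (S n)
      = al (S n) * be n)
  (E2 : forall n : nat, (2 <= n)%nat ->
      tau * ep (n - 1)%nat * ep n + q * ep n * ph (n - 1)%nat
      + sigma * ph n * ph (n - 1)%nat
      = ep (n - 1)%nat * ph n)
  (E3 : forall n : nat,
      theta * al n + eta * be n + tau * al n * (ga n + ga (S n))
      + sigma * be n * (de n + de (S n))
      + q * (al n * de (S n) + be n * ga n)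
      = be n * ga (S n) + al n * de n)
  (E4 : forall n : nat, (1 <= n)%nat ->
      theta * ep n + eta * ph n + tau * ep n * (ga n + ga (n - 1)%nat)
      + sigma * ph n * (de (n - 1)%nat + de n)
      + q * (ph n * ga n + de (n - 1)%nat * ep n)
      = ep n * de n + ph n * ga (n - 1)%nat)
  (E5 : forall n : nat, (1 <= n)%nat ->
      1 + theta * ga n + eta * de n + tau * (ga n) ^ 2 + sigma * (de n) ^ 2
      + tau * (al (n - 1)%nat * ep n + al n * ep (S n))
      + sigma * (ph n * be (n - 1)%nat + be n * ph (S n))
      + q * (ga n * de n + be (n - 1)%nat * ep n + al n * ph (S n))
      = ga n * de n + be n * ep (S n) + ph n * al (n - 1)%nat)
  (I_al : al 0%nat = 0) (I_ga : ga 0%nat = 0) (I_de : de 0%nat = 0)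
  (I_ph : ph 1%nat = 0) (I_be : be 0%nat = 1) (I_ep : ep 1%nat = 1)
  (Hab : forall n : nat, al n <> 0 \/ be n <> 0)
  (Hep : forall n : nat, (1 <= n)%nat -> ep n <> 0 \/ ph n <> 0) :
  (forall n : nat, al n = sigma * lam sigma tau q n * be n) /\
  (forall n : nat, (1 <= n)%nat -> ph n = tau * lam sigma tau q (n - 1)%nat * ep n).
Proof.
  split; [exact (ratio_invariant _ _ _ _ _ Hwd Hab E1 I_al)|].
  assert (Hph : forall m, ph (S m) = tau * lam tau sigma q m * ep (S m)).
  { apply ratio_invariant; [| | | exact I_ph].
    - intro m; rewrite lam_sym, (Rmult_comm tau sigma); apply Hwd.
    - intro m; apply or_comm, Hep; lia.
    - intro m; specialize (E2 (S (S m)) ltac:(lia)).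
      replace (S (S m) - 1)%nat with (S m) in E2 by lia; lra. }
  intros [|m] Hm; [lia|].
  replace (S m - 1)%nat with m by lia.
  rewrite Hph, lam_sym; reflexivity.
Qed.
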